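(* Let $X$ be an AM-space such that the closed unit ball $\mathbf B(X)$ is the norm closed solid convex hull of finitely many of its elements. Then $X$ is lattice isometric to $C(K)$ for some compact Hausdorff space $K$.
   Context: An AM-space is a Banach lattice whose norm satisfies $\|x\vee y\|=\max(\|x\|,\|y\|)$ for all $x,y\ge0$. The solid convex hull of $S$ is the smallest convex set $D\supseteq S$ such that $x\in X$, $z\in D$, $|x|\le|z|$ imply $x\in D$. *)

From Stdlib Require Import Reals List.
Open Scope R_scope.

Record BanachLattice := {
  bl_car :> Type;
  bl_zero : bl_car;
  bl_add : bl_car -> bl_car -> bl_car;
  bl_opp : bl_car -> bl_car;
  bl_scal : R -> bl_car -> bl_car;
  bl_le : bl_car -> bl_car -> Prop;
  bl_sup : bl_car -> bl_car -> bl_car;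
  bl_inf : bl_car -> bl_car -> bl_car;
  bl_norm : bl_car -> R;
  bl_addA : forall x y z, bl_add x (bl_add y z) = bl_add (bl_add x y) z;
  bl_addC : forall x y, bl_add x y = bl_add y x;
  bl_add0 : forall x, bl_add x bl_zero = x;
  bl_addN : forall x, bl_add x (bl_opp x) = bl_zero;
  bl_scal1 : forall x, bl_scal 1 x = x;
  bl_scalA : forall a b x, bl_scal a (bl_scal b x) = bl_scal (a * b) x;
  bl_scalDr : forall a x y, bl_scal a (bl_add x y) = bl_add (bl_scal a x) (bl_scal a y);
  bl_scalDl : forall a b x, bl_scal (a + b) x = bl_add (bl_scal a x) (bl_scal b x);
  bl_le_refl : forall x, bl_le x x;
  bl_le_antisym : forall x y, bl_le x y -> bl_le y x -> x = y;
  bl_le_trans : forall x y z, bl_le x y -> bl_le y z -> bl_le x z;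
  bl_le_add : forall x y z, bl_le x y -> bl_le (bl_add x z) (bl_add y z);
  bl_le_scal : forall a x y, 0 <= a -> bl_le x y -> bl_le (bl_scal a x) (bl_scal a y);
  bl_sup_l : forall x y, bl_le x (bl_sup x y);
  bl_sup_r : forall x y, bl_le y (bl_sup x y);
  bl_sup_least : forall x y z, bl_le x z -> bl_le y z -> bl_le (bl_sup x y) z;
  bl_inf_l : forall x y, bl_le (bl_inf x y) x;
  bl_inf_r : forall x y, bl_le (bl_inf x y) y;
  bl_inf_greatest : forall x y z, bl_le z x -> bl_le z y -> bl_le z (bl_inf x y);
  bl_norm_eq0 : forall x, bl_norm x = 0 -> x = bl_zero;
  bl_normZ : forall a x, bl_norm (bl_scal a x) = Rabs a * bl_norm x;
  bl_normD : forall x y, bl_norm (bl_add x y) <= bl_norm x + bl_norm y;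
  bl_norm_mono : forall x y,
    bl_le (bl_sup x (bl_opp x)) (bl_sup y (bl_opp y)) -> bl_norm x <= bl_norm y;
  bl_complete : forall u : nat -> bl_car,
    (forall eps, eps > 0 -> exists N, forall n m, (n >= N)%nat -> (m >= N)%nat ->
        bl_norm (bl_add (u n) (bl_opp (u m))) < eps) ->
    exists l, forall eps, eps > 0 -> exists N, forall n, (n >= N)%nat ->
        bl_norm (bl_add (u n) (bl_opp l)) < eps
}.

Arguments bl_zero {_}.
Arguments bl_add {_}.
Arguments bl_opp {_}.
Arguments bl_scal {_}.
Arguments bl_le {_}.
Arguments bl_sup {_}.
Arguments bl_inf {_}.
Arguments bl_norm {_}.

Definition bl_abs {X : BanachLattice} (x : X) : X := bl_sup x (bl_opp x).

Definition AM_space (X : BanachLattice) : Prop :=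
  forall x y : X, bl_le bl_zero x -> bl_le bl_zero y ->
    bl_norm (bl_sup x y) = Rmax (bl_norm x) (bl_norm y).

Definition convex_set {X : BanachLattice} (D : X -> Prop) : Prop :=
  forall x y t, D x -> D y -> 0 <= t <= 1 ->
    D (bl_add (bl_scal t x) (bl_scal (1 - t) y)).

Definition solid_set {X : BanachLattice} (D : X -> Prop) : Prop :=
  forall x z, D z -> bl_le (bl_abs x) (bl_abs z) -> D x.

Definition solid_convex_hull {X : BanachLattice} (S : X -> Prop) : X -> Prop :=
  fun x => forall D : X -> Prop, convex_set D -> solid_set D ->
    (forall s, S s -> D s) -> D x.

Definition norm_closure {X : BanachLattice} (A : X -> Prop) : X -> Prop :=
  fun x => forall eps, eps > 0 -> exists a, A a /\ bl_norm (bl_add x (bl_opp a)) < eps.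

Definition unit_ball (X : BanachLattice) : X -> Prop := fun x => bl_norm x <= 1.

Record TopSpace := {
  ts_car :> Type;
  ts_open : (ts_car -> Prop) -> Prop;
  ts_open_full : ts_open (fun _ => True);
  ts_open_inter : forall U V, ts_open U -> ts_open V -> ts_open (fun x => U x /\ V x);
  ts_open_union : forall (I : Type) (U : I -> ts_car -> Prop),
    (forall i, ts_open (U i)) -> ts_open (fun x => exists i, U i x)
}.
Arguments ts_open {_}.

Definition compact_space (K : TopSpace) : Prop :=
  forall (I : Type) (U : I -> K -> Prop),
    (forall i, ts_open (U i)) -> (forall k, exists i, U i k) ->
    exists l : list I, forall k, exists i, In i l /\ U i k.

Definition hausdorff_space (K : TopSpace) : Prop :=
  forall x y : K, x <> y -> exists U V, ts_open U /\ ts_open V /\ U x /\ V y /\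
    (forall z, ~ (U z /\ V z)).

Definition continuous_fun {K : TopSpace} (f : K -> R) : Prop :=
  forall k eps, eps > 0 -> exists U, ts_open U /\ U k /\
    forall y, U y -> Rabs (f y - f k) < eps.

(** sup norm on C(K) (the value 0 is included so that C(empty) = {0} has norm 0) *)
Definition sup_norm_is {K : TopSpace} (f : K -> R) (r : R) : Prop :=
  is_lub (fun s => s = 0 \/ exists k, s = Rabs (f k)) r.

Definition lattice_isometry_onto_CK (X : BanachLattice) (K : TopSpace) (T : X -> K -> R) : Prop :=
  (forall x, continuous_fun (T x)) /\
  (forall x y k, T (bl_add x y) k = T x k + T y k) /\
  (forall a x k, T (bl_scal a x) k = a * T x k) /\
  (forall x y, (forall k, T x k = T y k) -> x = y) /\
  (forall f : K -> R, continuous_fun f -> exists x, forall k, T x k = f k) /\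
  (forall x y k, T (bl_sup x y) k = Rmax (T x k) (T y k)) /\
  (forall x y k, T (bl_inf x y) k = Rmin (T x k) (T y k)) /\
  (forall x, sup_norm_is (T x) (bl_norm x)).

(* The set {z : |z| <= e} is convex, solid and norm closed, so
      for e = |s_1| \v ... \v |s_n| it contains the closed solid convex hull of
      the s_i, i.e. the unit ball; conversely the AM-property gives
      ||e|| <= 1. Hence the unit ball is the order interval [-e, e] and
      ||x|| = min {r >= 0 : |x| <= r e} is the order-unit norm.
   3. Characters: real lattice homomorphisms phi with phi e = 1. The
      separation theorem (via Zorn's lemma on "cones avoiding e") produces a
      character that is nonpositive on any set P such that no positive
      multiple of a finite supremum of elements of P dominates e.
   4. The spectrum K (the characters, with the weak topology) is Hausdorff
      and, by the separation theorem, compact; it also shows that every norm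
      is attained: ||x|| = max_K |phi x|.
   5. A lattice Stone-Weierstrass argument approximates every continuous
      function uniformly by evaluations; completeness of X then makes the
      evaluation map x |-> (phi |-> phi x) a surjective lattice isometry
      onto C(K). *)
From Stdlib Require Import Reals List Lra ZArith.
From Stdlib Require Import Classical FunctionalExtensionality ProofIrrelevance IndefiniteDescription.
From mathcomp Require classical_sets.
Open Scope R_scope.

(* Zorn's lemma for families of sets in which every nonempty chain has its
   union in the family; a nonempty member A0 of the family rules out the
   empty set as the maximal element. *)
Lemma zorn_nonempty_chains (T : Type) (P : (T -> Prop) -> Prop) (A0 : T -> Prop) (x0 : T) :
  P A0 -> A0 x0 ->
  (forall F : (T -> Prop) -> Prop, (exists A, F A) -> (forall A, F A -> P A) ->
     (forall A B, F A -> F B -> (forall x, A x -> B x) \/ (forall x, B x -> A x)) ->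
     P (fun x => exists A, F A /\ A x)) ->
  exists A, P A /\ forall B, (forall x, A x -> B x) -> P B -> forall x, B x -> A x.
Proof.
intros PA0 Ax0 Hchain.
pose (P' := fun A : T -> Prop => (forall x, ~ A x) \/ P A).
destruct (@classical_sets.Zorn_bigcup T P') as [A [P'A Amax]].
- intros F FP tot.
  destruct (classic (exists A, F A /\ P A)) as [[A1 [FA1 PA1]]|Hempty].
  + right.
    assert (Eunion : classical_sets.bigcup F (fun X => X) = (fun x => exists A, (F A /\ P A) /\ A x)).
    { apply boolp.funext; intro x; apply boolp.propext; split.
      - intros [A FA Ax]. exists A. split; [split|]; auto.
        destruct (FP A FA) as [Hem|HP]; [exfalso; exact (Hem x Ax)|exact HP].
      - intros [A [[FA _] Ax]]. exists A; auto. }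
    rewrite Eunion. apply Hchain.
    * exists A1; split; auto.
    * intros A [_ HA]; exact HA.
    * intros A B [FA _] [FB _]. destruct (tot A B FA FB); [left|right]; auto.
  + left. intros x [A FA Ax]. apply Hempty. exists A. split; auto.
    destruct (FP A FA) as [Hem|HP]; [exfalso; exact (Hem x Ax)|exact HP].
- assert (PA : P A).
  { destruct P'A as [Hem|HP]; auto. exfalso. apply (Amax A0).
    + split. intros x Ax; exfalso; exact (Hem x Ax).
      intro Hsub. exact (Hem x0 (Hsub x0 Ax0)).
    + right; exact PA0. }
  exists A. split; auto.
  intros B AB PB. apply NNPP; intro Hn.
  apply (Amax B); [|right; exact PB].
  split; [exact AB|]. intro BA. apply Hn. exact BA.
Qed.

Notation "x <+> y" := (bl_add x y) (at level 50, left associativity).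
Notation "a <.> x" := (bl_scal a x) (at level 40).
Notation "x <<= y" := (bl_le x y) (at level 70).
Notation "x \v y" := (bl_sup x y) (at level 45, left associativity).
Notation "x \^ y" := (bl_inf x y) (at level 45, left associativity).
Notation "'--' x" := (bl_opp x) (at level 35, right associativity).

Section VectorLattice.
Variable X : BanachLattice.
Local Notation O := (@bl_zero X).

Lemma add0l (x : X) : O <+> x = x.
Proof. rewrite bl_addC; apply bl_add0. Qed.
Lemma addNl (x : X) : -- x <+> x = O.
Proof. rewrite bl_addC; apply bl_addN. Qed.
Lemma add_cancel_l (x y z : X) : z <+> x = z <+> y -> x = y.
Proof. intro H. rewrite <- (add0l x), <- (add0l y), <- (addNl z), <- !bl_addA, H. reflexivity. Qed.
Lemma add_cancel_r (x y z : X) : x <+> z = y <+> z -> x = y.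
Proof. intro H. apply (add_cancel_l _ _ z). rewrite (bl_addC _ z x), (bl_addC _ z y). exact H. Qed.
Lemma opp_uniq (x y : X) : x <+> y = O -> y = -- x.
Proof. intro H. apply (add_cancel_l _ _ x). rewrite H, bl_addN. reflexivity. Qed.
Lemma opp_opp (x : X) : -- -- x = x.
Proof. symmetry. apply opp_uniq. apply addNl. Qed.
Lemma opp_add (x y : X) : -- (x <+> y) = -- x <+> -- y.
Proof. symmetry. apply opp_uniq.
 rewrite (bl_addC _ (--x)), bl_addA, <- (bl_addA _ x), bl_addN, bl_add0, bl_addN. reflexivity. Qed.
Lemma opp0 : -- O = O.
Proof. symmetry; apply opp_uniq; apply bl_add0. Qed.
Lemma addACA (a b c d : X) : (a <+> b) <+> (c <+> d) = (a <+> c) <+> (b <+> d).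
Proof. rewrite <- !bl_addA. f_equal. rewrite !bl_addA. f_equal. apply bl_addC. Qed.
Lemma add_sub_cancel (x y : X) : x <+> y <+> -- y = x.
Proof. rewrite <- bl_addA, bl_addN, bl_add0. reflexivity. Qed.
Lemma sub_add_cancel (x y : X) : x <+> -- y <+> y = x.
Proof. rewrite <- bl_addA, addNl, bl_add0. reflexivity. Qed.
Lemma sub_eq0 (x y : X) : x <+> -- y = O -> x = y.
Proof. intro H. rewrite <- (sub_add_cancel x y), H, add0l. reflexivity. Qed.
Lemma scal0l (x : X) : 0 <.> x = O.
Proof. apply (add_cancel_l _ _ (0 <.> x)). rewrite <- bl_scalDl, Rplus_0_r, bl_add0. reflexivity. Qed.
Lemma scal0r (a : R) : a <.> O = O.
Proof. apply (add_cancel_l _ _ (a <.> O)). rewrite <- bl_scalDr, !bl_add0. reflexivity. Qed.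
Lemma scal_opp_r (a : R) (x : X) : a <.> (-- x) = -- (a <.> x).
Proof. apply opp_uniq. rewrite <- bl_scalDr, bl_addN. apply scal0r. Qed.
Lemma scal_opp_l (a : R) (x : X) : (- a) <.> x = -- (a <.> x).
Proof. apply opp_uniq. rewrite <- bl_scalDl, Rplus_opp_r. apply scal0l. Qed.
Lemma opp_scal (x : X) : -- x = (-1) <.> x.
Proof. replace (-1) with (- (1)) by ring. rewrite scal_opp_l, bl_scal1. reflexivity. Qed.
Lemma scal_sub (a b : R) (x : X) : (a - b) <.> x = a <.> x <+> -- (b <.> x).
Proof. unfold Rminus. rewrite bl_scalDl, scal_opp_l. reflexivity. Qed.
Lemma scal_inv_cancel (t : R) (z : X) : t <> 0 -> t <.> ((/t) <.> z) = z.
Proof. intro H. rewrite bl_scalA, Rinv_r, bl_scal1 by exact H. reflexivity. Qed.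
Lemma half_double (a : X) : (/2) <.> (a <+> a) = a.
Proof. rewrite bl_scalDr, <- bl_scalDl. replace (/2 + /2) with 1 by field. apply bl_scal1. Qed.

Lemma le_add_r (x y z : X) : x <<= y -> x <+> z <<= y <+> z.
Proof. apply bl_le_add. Qed.
Lemma le_add_l (x y z : X) : x <<= y -> z <+> x <<= z <+> y.
Proof. intro H. rewrite (bl_addC _ z x), (bl_addC _ z y). apply bl_le_add; exact H. Qed.
Lemma le_add2 (a b c d : X) : a <<= b -> c <<= d -> a <+> c <<= b <+> d.
Proof. intros H1 H2. eapply bl_le_trans. apply le_add_r; exact H1. apply le_add_l; exact H2. Qed.
Lemma le_opp (x y : X) : x <<= y -> -- y <<= -- x.
Proof. intro H.
 assert (Ex : x <+> (--x <+> --y) = --y) by (rewrite bl_addA, bl_addN, add0l; reflexivity).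
 assert (Ey : y <+> (--x <+> --y) = --x)
   by (rewrite (bl_addC _ (--x)), bl_addA, bl_addN, add0l; reflexivity).
 pose proof (le_add_r _ _ (--x <+> --y) H) as Hs. rewrite Ex, Ey in Hs. exact Hs. Qed.
Lemma le_move_r (x y z : X) : x <+> z <<= y -> x <<= y <+> -- z.
Proof. intro H. rewrite <- (add_sub_cancel x z). apply le_add_r; exact H. Qed.
Lemma le_move_l (x y z : X) : x <<= y <+> -- z -> x <+> z <<= y.
Proof. intro H. rewrite <- (sub_add_cancel y z). apply le_add_r; exact H. Qed.
Lemma le_move_r' (x y z : X) : x <+> -- z <<= y -> x <<= y <+> z.
Proof. intro H. rewrite <- (sub_add_cancel x z). apply le_add_r; exact H. Qed.
Lemma le_move_l' (x y z : X) : x <<= y <+> z -> x <+> -- z <<= y.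
Proof. intro H. rewrite <- (add_sub_cancel y z). apply le_add_r; exact H. Qed.
Lemma le_sub_0 (x y : X) : O <<= y <+> -- x -> x <<= y.
Proof. intro H. rewrite <- (add0l x). apply le_move_l; exact H. Qed.
Lemma le_scal_r (a b : R) (x : X) : a <= b -> O <<= x -> a <.> x <<= b <.> x.
Proof. intros H Hx. apply le_sub_0. rewrite <- scal_sub, <- (scal0r (b - a)).
 apply bl_le_scal; [lra|exact Hx]. Qed.
Lemma scal_pos (a : R) (x : X) : 0 <= a -> O <<= x -> O <<= a <.> x.
Proof. intros Ha Hx. rewrite <- (scal0r a). apply bl_le_scal; auto. Qed.

Lemma sup_comm (x y : X) : x \v y = y \v x.
Proof. apply bl_le_antisym; apply bl_sup_least; auto using bl_sup_l, bl_sup_r. Qed.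
Lemma inf_comm (x y : X) : x \^ y = y \^ x.
Proof. apply bl_le_antisym; apply bl_inf_greatest; auto using bl_inf_l, bl_inf_r. Qed.
Lemma sup_le_eq (x y : X) : x <<= y -> x \v y = y.
Proof. intro H. apply bl_le_antisym. apply bl_sup_least; auto using bl_le_refl. apply bl_sup_r. Qed.
Lemma sup_mono (a b c d : X) : a <<= b -> c <<= d -> a \v c <<= b \v d.
Proof. intros H1 H2. apply bl_sup_least.
 eapply bl_le_trans; [exact H1| apply bl_sup_l]. eapply bl_le_trans; [exact H2| apply bl_sup_r]. Qed.
Lemma inf_mono (a b c d : X) : a <<= b -> c <<= d -> a \^ c <<= b \^ d.
Proof. intros H1 H2. apply bl_inf_greatest.
 eapply bl_le_trans; [apply bl_inf_l|exact H1]. eapply bl_le_trans; [apply bl_inf_r|exact H2]. Qed.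
Lemma sup_add (x y z : X) : (x \v y) <+> z = (x <+> z) \v (y <+> z).
Proof. apply bl_le_antisym.
 - apply le_move_l. apply bl_sup_least; apply le_move_r; [apply bl_sup_l|apply bl_sup_r].
 - apply bl_sup_least; apply le_add_r; [apply bl_sup_l|apply bl_sup_r]. Qed.
Lemma inf_add (x y z : X) : (x \^ y) <+> z = (x <+> z) \^ (y <+> z).
Proof. apply bl_le_antisym.
 - apply bl_inf_greatest; apply le_add_r; [apply bl_inf_l|apply bl_inf_r].
 - apply le_move_r'. apply bl_inf_greatest; apply le_move_l'; [apply bl_inf_l|apply bl_inf_r]. Qed.
Lemma opp_sup (x y : X) : -- (x \v y) = (-- x) \^ (-- y).
Proof. apply bl_le_antisym.
 - apply bl_inf_greatest; apply le_opp; [apply bl_sup_l|apply bl_sup_r].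
 - rewrite <- (opp_opp ((--x) \^ (--y))). apply le_opp. apply bl_sup_least.
   + rewrite <- (opp_opp x) at 1. apply le_opp. apply bl_inf_l.
   + rewrite <- (opp_opp y) at 1. apply le_opp. apply bl_inf_r. Qed.
Lemma sup_inf_sum (x y : X) : (x \v y) <+> (x \^ y) = x <+> y.
Proof.
 assert (Einf : x \^ y = -- (x \v y) <+> (x <+> y)).
 { rewrite opp_sup, inf_add, bl_addA, addNl, add0l.
   rewrite (bl_addC _ x y), bl_addA, addNl, add0l. apply inf_comm. }
 rewrite Einf, bl_addA, bl_addN, add0l. reflexivity. Qed.
Lemma inf_scal_le (t : R) (a b : X) : 0 < t -> (t <.> a) \^ (t <.> b) <<= t <.> (a \^ b).
Proof. intro Ht. rewrite <- (scal_inv_cancel t ((t <.> a) \^ (t <.> b))) by lra.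
 apply bl_le_scal; [lra|].
 assert (Hcancel : forall z : X, /t <.> (t <.> z) = z)
   by (intro z; rewrite bl_scalA, Rinv_l, bl_scal1 by lra; reflexivity).
 assert (Hi : 0 <= / t) by (apply Rlt_le, Rinv_0_lt_compat; lra).
 apply bl_inf_greatest; [rewrite <- (Hcancel a) at 2|rewrite <- (Hcancel b) at 2];
   apply bl_le_scal; auto; [apply bl_inf_l|apply bl_inf_r]. Qed.

Definition ppart (x : X) : X := x \v O.
Definition npart (x : X) : X := (-- x) \v O.
Lemma inf0_eq (x : X) : x \^ O = -- npart x.
Proof. unfold npart. rewrite opp_sup, opp_opp, opp0. reflexivity. Qed.
Lemma ppart_eq (x : X) : ppart x = x <+> npart x.
Proof. unfold ppart. apply (add_cancel_r _ _ (x \^ O)).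
 rewrite sup_inf_sum, inf0_eq, add_sub_cancel, bl_add0. reflexivity. Qed.
Lemma ppart_inf_npart (x : X) : ppart x \^ npart x = O.
Proof. rewrite ppart_eq. rewrite <- (add0l (npart x)) at 2.
 rewrite <- inf_add, inf0_eq, addNl. reflexivity. Qed.
Lemma ppart_ge0 (x : X) : O <<= ppart x.
Proof. apply bl_sup_r. Qed.
Lemma npart_ge0 (x : X) : O <<= npart x.
Proof. apply bl_sup_r. Qed.
Lemma le_ppart (x : X) : x <<= ppart x.
Proof. apply bl_sup_l. Qed.
Lemma ppart_mono (x y : X) : x <<= y -> ppart x <<= ppart y.
Proof. intro H. apply sup_mono; auto using bl_le_refl. Qed.
Lemma ppart_of_ge0 (z : X) : O <<= z -> ppart z = z.
Proof. intro H. unfold ppart. rewrite sup_comm. apply sup_le_eq; exact H. Qed.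

Lemma le_abs (x : X) : x <<= bl_abs x.
Proof. apply bl_sup_l. Qed.
Lemma le_abs_opp (x : X) : -- x <<= bl_abs x.
Proof. apply bl_sup_r. Qed.
Lemma abs_le (x a : X) : x <<= a -> -- x <<= a -> bl_abs x <<= a.
Proof. intros; apply bl_sup_least; auto. Qed.
Lemma abs_ge0 (x : X) : O <<= bl_abs x.
Proof. rewrite <- (half_double (bl_abs x)). apply scal_pos; [lra|].
 rewrite <- (bl_addN _ x). apply le_add2; [apply le_abs|apply le_abs_opp]. Qed.
Lemma abs_of_ge0 (x : X) : O <<= x -> bl_abs x = x.
Proof. intro H. unfold bl_abs. rewrite sup_comm. apply sup_le_eq.
 eapply bl_le_trans; [|exact H]. rewrite <- opp0. apply le_opp; exact H. Qed.
Lemma abs_triangle (a b : X) : bl_abs (a <+> b) <<= bl_abs a <+> bl_abs b.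
Proof. apply abs_le. apply le_add2; apply le_abs.
 rewrite opp_add. apply le_add2; apply le_abs_opp. Qed.
Lemma abs_scal_le (t : R) (x : X) : 0 <= t -> bl_abs (t <.> x) <<= t <.> bl_abs x.
Proof. intro Ht. apply abs_le. apply bl_le_scal; auto; apply le_abs.
 rewrite <- scal_opp_r. apply bl_le_scal; auto; apply le_abs_opp. Qed.
Lemma abs_le0 (x : X) : bl_abs x <<= O -> x = O.
Proof. intro H. apply bl_le_antisym. eapply bl_le_trans; [apply le_abs|exact H].
 rewrite <- (opp_opp x), <- opp0. apply le_opp. eapply bl_le_trans; [apply le_abs_opp|exact H]. Qed.

Lemma norm_abs (x : X) : bl_norm (bl_abs x) = bl_norm x.
Proof. assert (Habs2 : bl_abs (bl_abs x) = bl_abs x) by apply abs_of_ge0, abs_ge0.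
 apply Rle_antisym; apply bl_norm_mono; fold (bl_abs (bl_abs x)); fold (bl_abs x);
 rewrite Habs2; apply bl_le_refl. Qed.
Lemma norm0 : bl_norm O = 0.
Proof. rewrite <- (scal0l O), bl_normZ, Rabs_R0. ring. Qed.
Lemma norm_opp (x : X) : bl_norm (-- x) = bl_norm x.
Proof. rewrite opp_scal, bl_normZ. rewrite Rabs_left by lra. ring. Qed.
Lemma norm_ge0 (x : X) : 0 <= bl_norm x.
Proof. pose proof (bl_normD X x (-- x)) as H. rewrite bl_addN, norm0, norm_opp in H. lra. Qed.
Lemma norm_mono_pos (a b : X) : O <<= a -> a <<= b -> bl_norm a <= bl_norm b.
Proof. intros Ha Hb. apply bl_norm_mono. fold (bl_abs a); fold (bl_abs b).
 rewrite !abs_of_ge0; auto. eapply bl_le_trans; eauto. Qed.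

Definition list_sup (b : X) (l : list X) : X := fold_right (fun a acc => a \v acc) b l.
Definition list_inf (b : X) (l : list X) : X := fold_right (fun a acc => a \^ acc) b l.

Lemma list_sup_ge (b : X) (l : list X) (y : X) : In y l -> y <<= list_sup b l.
Proof. induction l as [|a l IH]; simpl. tauto.
 intros [<-|H]. apply bl_sup_l. eapply bl_le_trans; [apply IH; auto|apply bl_sup_r]. Qed.
Lemma list_sup_base (b : X) (l : list X) : b <<= list_sup b l.
Proof. induction l as [|a l IH]; simpl. apply bl_le_refl.
 eapply bl_le_trans; [apply IH|apply bl_sup_r]. Qed.
Lemma list_sup_app_l (b : X) (l1 l2 : list X) : list_sup b l1 <<= list_sup b (l1 ++ l2).
Proof. induction l1 as [|a l1 IH]; simpl. apply list_sup_base.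
 apply sup_mono; auto using bl_le_refl. Qed.
Lemma list_sup_app_r (b : X) (l1 l2 : list X) : list_sup b l2 <<= list_sup b (l1 ++ l2).
Proof. induction l1 as [|a l1 IH]; simpl. apply bl_le_refl.
 eapply bl_le_trans; [exact IH|apply bl_sup_r]. Qed.
Lemma list_inf_le (b : X) (l : list X) (y : X) : In y l -> list_inf b l <<= y.
Proof. induction l as [|a l IH]; simpl. tauto.
 intros [<-|H]. apply bl_inf_l. eapply bl_le_trans; [apply bl_inf_r|apply IH; auto]. Qed.
Lemma list_inf_base (b : X) (l : list X) : list_inf b l <<= b.
Proof. induction l as [|a l IH]; simpl. apply bl_le_refl.
 eapply bl_le_trans; [apply bl_inf_r|apply IH]. Qed.

Lemma le_disjoint_le0 (z u v : X) (mu : R) : 0 <= mu -> u \^ v = O ->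
  z <<= mu <.> u -> z <<= mu <.> v -> z <<= O.
Proof. intros Hmu Huv Hu Hv. destruct (Req_dec mu 0) as [H0|H0].
 - subst mu. rewrite scal0l in Hu. exact Hu.
 - rewrite <- (scal0r mu), <- Huv. eapply bl_le_trans; [|apply inf_scal_le; lra].
   apply bl_inf_greatest; auto. Qed.
End VectorLattice.

Section OrderInterval.
Variable X : BanachLattice.
Local Notation O := (@bl_zero X).

Definition order_interval (e : X) (z : X) : Prop := bl_abs z <<= e.

Lemma order_interval_convex (e : X) : convex_set (order_interval e).
Proof. intros x y t Hx Hy Ht. unfold order_interval in *.
 eapply bl_le_trans; [apply abs_triangle|].
 assert (Esplit : e = t <.> e <+> (1 - t) <.> e).
 { rewrite <- bl_scalDl. replace (t + (1 - t)) with 1 by ring. rewrite bl_scal1; reflexivity. }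
 rewrite Esplit.
 apply le_add2; (eapply bl_le_trans; [apply abs_scal_le; lra|]); apply bl_le_scal; auto; lra. Qed.

Lemma order_interval_solid (e : X) : solid_set (order_interval e).
Proof. intros x z Hz H. unfold order_interval in *. eapply bl_le_trans; eauto. Qed.

(* Closedness: (|y| - e)^+ is dominated by |y - a| for every a in the
   interval, so it has arbitrarily small norm and vanishes. *)
Lemma order_interval_closed (e y : X) :
  norm_closure (order_interval e) y -> order_interval e y.
Proof. intro Hcl. set (w := ppart X (bl_abs y <+> -- e)).
 assert (Hsmall : forall eps, eps > 0 -> bl_norm w < eps).
 { intros eps Heps. destruct (Hcl eps Heps) as [a [Ha Hn]].
   eapply Rle_lt_trans; [|exact Hn]. rewrite <- (norm_abs X (y <+> -- a)).
   apply norm_mono_pos; [apply ppart_ge0|].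
   rewrite <- (ppart_of_ge0 X (bl_abs (y <+> -- a))) by apply abs_ge0. apply ppart_mono.
   apply le_move_l'. eapply bl_le_trans.
   2:{ rewrite bl_addC. apply le_add_r. exact Ha. }
   rewrite <- (sub_add_cancel X y a) at 1. rewrite bl_addC. apply abs_triangle. }
 assert (Hw0 : w = O).
 { apply bl_norm_eq0. destruct (Rle_lt_or_eq_dec 0 (bl_norm w) (norm_ge0 X w)) as [Hp|He]; auto.
   specialize (Hsmall _ Hp). lra. }
 unfold order_interval. rewrite <- (add0l X e). apply le_move_r'. rewrite <- Hw0. apply le_ppart. Qed.

(* |s_1| \v ... \v |s_n| \v 0: the candidate order unit. *)
Definition sup_abs_list (l : list X) : X := list_sup X O (map bl_abs l).

Lemma le_sup_abs_list (l : list X) (a : X) : In a l -> bl_abs a <<= sup_abs_list l.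
Proof. intro H. apply list_sup_ge, in_map, H. Qed.

Lemma sup_abs_list_norm (HAM : AM_space X) (l : list X) :
  (forall x, In x l -> bl_norm x <= 1) -> bl_norm (sup_abs_list l) <= 1.
Proof. unfold sup_abs_list. induction l as [|a l IH]; simpl; intro H. rewrite norm0; lra.
 rewrite HAM by (apply abs_ge0 || apply list_sup_base).
 apply Rmax_lub; [rewrite norm_abs; apply H; simpl; auto|].
 apply IH. intros; apply H; simpl; auto. Qed.

Lemma unit_ball_order_interval (HAM : AM_space X) (s : list X) :
  (forall x, In x s -> unit_ball X x) ->
  (forall x, unit_ball X x <-> norm_closure (solid_convex_hull (fun y => In y s)) x) ->
  forall y, bl_norm y <= 1 <-> bl_abs y <<= sup_abs_list s.
Proof. intros Hs1 Hs2 y. split.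
 - intro Hy. apply (proj1 (Hs2 y)) in Hy. apply order_interval_closed.
   intros eps Heps. destruct (Hy eps Heps) as [a [Ha Hn]]. exists a. split; auto.
   apply Ha; [apply order_interval_convex|apply order_interval_solid|].
   intros z Hz. apply le_sup_abs_list; exact Hz.
 - intro H. eapply Rle_trans; [|apply (sup_abs_list_norm HAM s Hs1)].
   rewrite <- norm_abs. apply norm_mono_pos; auto. apply abs_ge0. Qed.

Section UnitBallInterval.
Variable e : X.
Hypothesis ball_e : forall y : X, bl_norm y <= 1 <-> bl_abs y <<= e.

Lemma order_unit_ge0 : O <<= e.
Proof. rewrite <- (abs_of_ge0 X O) by apply bl_le_refl. apply ball_e. rewrite norm0; lra. Qed.

Lemma abs_le_norm_unit (x : X) : bl_abs x <<= bl_norm x <.> e.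
Proof. destruct (Req_dec (bl_norm x) 0) as [H0|H0].
 - rewrite H0, (bl_norm_eq0 X x H0), scal0l, abs_of_ge0; apply bl_le_refl.
 - pose proof (norm_ge0 X x) as Hn. set (n := bl_norm x) in *.
   assert (Hy : bl_abs ((/n) <.> x) <<= e).
   { apply ball_e. rewrite bl_normZ, Rabs_right.
     - unfold n. rewrite Rinv_l by (fold n; lra); lra.
     - apply Rle_ge, Rlt_le, Rinv_0_lt_compat. lra. }
   rewrite <- (scal_inv_cancel X n x) at 1 by lra.
   eapply bl_le_trans; [apply abs_scal_le; lra|]. apply bl_le_scal; auto. Qed.

Lemma norm_le_of_abs_le (x : X) (r : R) : 0 <= r -> bl_abs x <<= r <.> e -> bl_norm x <= r.
Proof. intros Hr H. destruct (Req_dec r 0) as [H0|H0].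
 - subst r. rewrite scal0l in H. rewrite (abs_le0 X x H), norm0; lra.
 - assert (Hi : 0 <= / r) by (apply Rlt_le, Rinv_0_lt_compat; lra).
   assert (Hy : bl_abs ((/r) <.> x) <<= e).
   { eapply bl_le_trans; [apply abs_scal_le; exact Hi|].
     eapply bl_le_trans; [apply bl_le_scal; [exact Hi|exact H]|].
     rewrite bl_scalA, Rinv_l, bl_scal1 by lra. apply bl_le_refl. }
   apply ball_e in Hy. rewrite bl_normZ, Rabs_right in Hy by lra.
   apply (Rmult_le_compat_l r) in Hy; [|lra]. rewrite <- Rmult_assoc, Rinv_r, Rmult_1_l in Hy; lra. Qed.
End UnitBallInterval.
End OrderInterval.

Section Characters.
Variable X : BanachLattice.
Local Notation O := (@bl_zero X).
Variable e : X.
Hypothesis e_ge0 : O <<= e.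
Hypothesis abs_le_norm_e : forall x : X, bl_abs x <<= bl_norm x <.> e.

Record is_character (f : X -> R) : Prop := {
  ch_add : forall x y, f (x <+> y) = f x + f y;
  ch_scal : forall a x, f (a <.> x) = a * f x;
  ch_sup : forall x y, f (x \v y) = Rmax (f x) (f y);
  ch_unit : f e = 1 }.

Section CharacterFacts.
Variable f : X -> R.
Hypothesis Hf : is_character f.

Lemma ch_zero : f O = 0.
Proof. rewrite <- (scal0l X O), (ch_scal _ Hf). ring. Qed.
Lemma ch_opp (x : X) : f (-- x) = - f x.
Proof. rewrite opp_scal, (ch_scal _ Hf). ring. Qed.
Lemma ch_sub (x y : X) : f (x <+> -- y) = f x - f y.
Proof. rewrite (ch_add _ Hf), ch_opp. ring. Qed.
Lemma ch_sub_unit (x : X) (t : R) : f (x <+> -- (t <.> e)) = f x - t.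
Proof. rewrite ch_sub, (ch_scal _ Hf), (ch_unit _ Hf). ring. Qed.
Lemma ch_mono (x y : X) : x <<= y -> f x <= f y.
Proof. intro H. rewrite <- (sup_le_eq X x y H), (ch_sup _ Hf). apply Rmax_l. Qed.
Lemma ch_inf (x y : X) : f (x \^ y) = Rmin (f x) (f y).
Proof. assert (E := sup_inf_sum X x y). apply (f_equal f) in E.
 rewrite !(ch_add _ Hf), (ch_sup _ Hf) in E. unfold Rmax, Rmin in *.
 destruct (Rle_dec (f x) (f y)); lra. Qed.
Lemma ch_abs (x : X) : f (bl_abs x) = Rabs (f x).
Proof. unfold bl_abs. rewrite (ch_sup _ Hf), ch_opp. unfold Rmax, Rabs.
 destruct (Rle_dec (f x) (- f x)); destruct (Rcase_abs (f x)); lra. Qed.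
Lemma ch_bound (x : X) : Rabs (f x) <= bl_norm x.
Proof. rewrite <- ch_abs. eapply Rle_trans; [apply ch_mono, abs_le_norm_e|].
 rewrite (ch_scal _ Hf), (ch_unit _ Hf). lra. Qed.
Lemma ch_list_sup_nonpos (L : list X) : (forall p, In p L -> f p <= 0) -> f (list_sup X O L) <= 0.
Proof. induction L as [|a L IH]; simpl; intro H. rewrite ch_zero; lra.
 rewrite (ch_sup _ Hf). apply Rmax_lub; auto. Qed.
End CharacterFacts.

(* The kernel
   {x : phi x <= 0} of a character nonpositive on P is one of them;
   conversely a total one defines a character. *)
Record avoiding_cone (P Q : X -> Prop) : Prop := {
  cone_zero : Q O;
  cone_add : forall x y, Q x -> Q y -> Q (x <+> y);
  cone_scal : forall a x, 0 <= a -> Q x -> Q (a <.> x);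
  cone_down : forall x y, y <<= x -> Q x -> Q y;
  cone_sup : forall x y, Q x -> Q y -> Q (x \v y);
  cone_avoids : forall q, Q q -> ~ e <<= q;
  cone_contains : forall p, P p -> Q p }.

(* A total avoiding cone M (x in M or -x in M for every x) defines a
   character: phi x = sup {r : x - r e is not in M}, the "value of x modulo M". *)
Section TotalCone.
Variable P : X -> Prop.
Variable M : X -> Prop.
Hypothesis HM : avoiding_cone P M.
Hypothesis Mtot : forall x, M x \/ M (-- x).

Definition below_cone (x : X) (r : R) : Prop := ~ M (x <+> -- (r <.> e)).

Lemma not_cone_pos_unit (r : R) : 0 < r -> ~ M (r <.> e).
Proof. intros Hr H. apply (cone_scal _ _ HM (/r)) in H; [|apply Rlt_le, Rinv_0_lt_compat; lra].
 rewrite bl_scalA, Rinv_l, bl_scal1 in H by lra. apply (cone_avoids _ _ HM e H). apply bl_le_refl. Qed.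

Lemma below_cone_bound (x : X) : bound (below_cone x).
Proof. exists (bl_norm x). intros r Hr. destruct (Rle_dec r (bl_norm x)) as [H|H]; auto.
 exfalso. apply Hr. apply (cone_down _ _ HM O). 2: apply (cone_zero _ _ HM).
 rewrite <- (bl_addN X (r <.> e)).
 apply le_add_r. eapply bl_le_trans. apply le_abs. eapply bl_le_trans. apply abs_le_norm_e.
 apply le_scal_r; auto; lra. Qed.

Lemma below_cone_nonempty (x : X) : exists r, below_cone x r.
Proof. exists (- bl_norm x - 1). intro H. apply (cone_avoids _ _ HM e); [|apply bl_le_refl].
 apply (cone_down _ _ HM (x <+> -- ((- bl_norm x - 1) <.> e)) e); [|exact H].
 rewrite <- (bl_scal1 X e) at 1. apply le_move_r. rewrite <- bl_scalDl.
 replace (1 + (- bl_norm x - 1)) with (- bl_norm x) by ring. rewrite scal_opp_l.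
 rewrite <- (opp_opp X x) at 2. apply le_opp.
 eapply bl_le_trans; [apply le_abs_opp|apply abs_le_norm_e]. Qed.

Definition cone_char (x : X) : R :=
  proj1_sig (completeness (below_cone x) (below_cone_bound x) (below_cone_nonempty x)).
Lemma cone_char_lub (x : X) : is_lub (below_cone x) (cone_char x).
Proof. unfold cone_char. destruct completeness; auto. Qed.

Lemma below_cone_down (x : X) (r r' : R) : r' <= r -> below_cone x r -> below_cone x r'.
Proof. intros Hr HA HM'. apply HA. apply (cone_down _ _ HM (x <+> -- (r' <.> e))). 2: exact HM'.
 apply le_add_l. apply le_opp. apply le_scal_r; auto. Qed.

Lemma cone_char_lt (x : X) (r : R) : r < cone_char x -> below_cone x r.
Proof. intro H. apply NNPP; intro Hn. destruct (cone_char_lub x) as [_ Hl].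
 assert (cone_char x <= r); [|lra]. apply Hl. intros r' Hr'. destruct (Rle_dec r' r); auto.
 exfalso; apply Hn. apply (below_cone_down _ r'); auto; lra. Qed.

Lemma cone_char_gt (x : X) (r : R) : cone_char x < r -> M (x <+> -- (r <.> e)).
Proof. intro H. apply NNPP; intro Hn. destruct (cone_char_lub x) as [Hu _].
 specialize (Hu r Hn). lra. Qed.

Lemma cone_char_le (x : X) (c : R) : (forall t, c < t -> M (x <+> -- (t <.> e))) -> cone_char x <= c.
Proof. intro H. destruct (Rle_dec (cone_char x) c) as [h|h]; auto. exfalso.
 apply (cone_char_lt x ((c + cone_char x)/2)); [lra|]. apply H; lra. Qed.

Lemma cone_char_ge (x : X) (c : R) : (forall t, t < c -> ~ M (x <+> -- (t <.> e))) -> c <= cone_char x.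
Proof. intro H. destruct (Rle_dec c (cone_char x)) as [h|h]; auto. exfalso.
 apply (H ((c + cone_char x)/2)); [lra|]. apply cone_char_gt; lra. Qed.

(* Additivity: subadditivity from the cone property, and phi (-x) <= - phi x
   from totality. *)
Lemma cone_char_zero : cone_char O = 0.
Proof. apply Rle_antisym.
 - apply cone_char_le. intros t Ht. apply (cone_down _ _ HM O); [|apply (cone_zero _ _ HM)].
   rewrite add0l. rewrite <- opp0. apply le_opp. apply scal_pos; auto; lra.
 - apply cone_char_ge. intros t Ht Hm. rewrite add0l, <- scal_opp_l in Hm.
   apply (not_cone_pos_unit (-t)); auto; lra. Qed.

Lemma cone_char_subadd (x y : X) : cone_char (x <+> y) <= cone_char x + cone_char y.
Proof. apply cone_char_le. intros t Ht.
 set (d := (t - cone_char x - cone_char y) / 2).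
 assert (Hd : 0 < d) by (unfold d; lra).
 replace t with ((cone_char x + d) + (cone_char y + d)) by (unfold d; field).
 rewrite bl_scalDl, opp_add, addACA. apply (cone_add _ _ HM); apply cone_char_gt; lra. Qed.

Lemma cone_char_opp_le (x : X) : cone_char (-- x) <= - cone_char x.
Proof. apply cone_char_le. intros t Ht.
 assert (Hl : below_cone x (- t)) by (apply cone_char_lt; lra).
 destruct (Mtot (x <+> -- ((- t) <.> e))) as [H|H]; [contradiction|].
 rewrite opp_add in H. rewrite scal_opp_l, !opp_opp in H. exact H. Qed.

Lemma cone_char_add (x y : X) : cone_char (x <+> y) = cone_char x + cone_char y.
Proof.
 assert (H0 : forall z, cone_char (-- z) = - cone_char z).
 { intro z. apply Rle_antisym. apply cone_char_opp_le.
   pose proof (cone_char_subadd z (-- z)) as H. rewrite bl_addN, cone_char_zero in H. lra. }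
 apply Rle_antisym. apply cone_char_subadd.
 pose proof (cone_char_subadd (x <+> y) (-- y)) as H. rewrite add_sub_cancel, H0 in H. lra. Qed.

Lemma cone_char_opp (x : X) : cone_char (-- x) = - cone_char x.
Proof. pose proof (cone_char_add x (-- x)) as H. rewrite bl_addN, cone_char_zero in H. lra. Qed.

Lemma cone_char_mono (x y : X) : x <<= y -> cone_char x <= cone_char y.
Proof. intro H. apply cone_char_le. intros t Ht. apply (cone_down _ _ HM (y <+> -- (t <.> e))).
 apply le_add_r; exact H. apply cone_char_gt; exact Ht. Qed.

Lemma cone_char_scal_le (a : R) (x : X) : 0 < a -> cone_char (a <.> x) <= a * cone_char x.
Proof. intro Ha. apply cone_char_le. intros t Ht.
 assert (E : a <.> x <+> -- (t <.> e) = a <.> (x <+> -- ((t / a) <.> e))).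
 { rewrite bl_scalDr, scal_opp_r, bl_scalA. f_equal. f_equal. f_equal. field. lra. }
 rewrite E. apply (cone_scal _ _ HM); [lra|]. apply cone_char_gt.
 apply (Rmult_lt_reg_l a); auto. unfold Rdiv.
 rewrite <- Rmult_assoc, (Rmult_comm a t), Rmult_assoc, Rinv_r; lra. Qed.

Lemma cone_char_scal (a : R) (x : X) : cone_char (a <.> x) = a * cone_char x.
Proof. assert (Hp : forall b y, 0 < b -> cone_char (b <.> y) = b * cone_char y).
 { intros b y Hb. apply Rle_antisym. apply cone_char_scal_le; auto.
   pose proof (cone_char_scal_le (/ b) (b <.> y)) as H. rewrite bl_scalA, Rinv_l, bl_scal1 in H by lra.
   assert (Hi : 0 < / b) by (apply Rinv_0_lt_compat; lra). specialize (H Hi).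
   apply (Rmult_le_compat_l b) in H; [|lra]. rewrite <- Rmult_assoc, Rinv_r, Rmult_1_l in H; lra. }
 destruct (Rtotal_order a 0) as [Hn|[Hz|Hpos]].
 - replace a with (- (- a)) by ring. rewrite scal_opp_l, cone_char_opp, Hp; [ring|lra].
 - subst a. rewrite scal0l, cone_char_zero. ring.
 - apply Hp; auto. Qed.

Lemma cone_char_sup (x y : X) : cone_char (x \v y) = Rmax (cone_char x) (cone_char y).
Proof. apply Rle_antisym.
 - apply cone_char_le. intros t Ht. rewrite sup_add. apply (cone_sup _ _ HM); apply cone_char_gt;
   [eapply Rle_lt_trans; [apply Rmax_l|exact Ht]|eapply Rle_lt_trans; [apply Rmax_r|exact Ht]].
 - apply Rmax_lub; apply cone_char_mono; [apply bl_sup_l|apply bl_sup_r]. Qed.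

Lemma cone_char_unit : cone_char e = 1.
Proof. apply Rle_antisym.
 - apply cone_char_le. intros t Ht. apply (cone_down _ _ HM O); [|apply (cone_zero _ _ HM)].
   rewrite <- (bl_scal1 X e) at 1. rewrite <- scal_sub. rewrite <- opp0.
   replace (1 - t) with (- (t - 1)) by ring. rewrite scal_opp_l. apply le_opp. apply scal_pos; auto; lra.
 - apply cone_char_ge. intros t Ht Hm. rewrite <- (bl_scal1 X e) in Hm at 1. rewrite <- scal_sub in Hm.
   apply (not_cone_pos_unit (1 - t)); auto; lra. Qed.

Lemma cone_char_is_character : is_character cone_char.
Proof.
 constructor; [apply cone_char_add|apply cone_char_scal|apply cone_char_sup|apply cone_char_unit].
Qed.

Lemma cone_char_nonpos (p : X) : M p -> cone_char p <= 0.
Proof. intro H. apply cone_char_le. intros t Ht. apply (cone_down _ _ HM p); auto.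
 rewrite <- (bl_add0 X p) at 2. apply le_add_l. rewrite <- opp0. apply le_opp.
 apply scal_pos; auto; lra. Qed.

End TotalCone.

Section Separation.
Variable P : X -> Prop.
Hypothesis P_avoids : forall L lam, (forall p, In p L -> P p) -> 0 <= lam ->
  ~ e <<= lam <.> list_sup X O L.

(* The smallest avoiding cone containing P. *)
Definition generated_cone (y : X) : Prop := exists L lam,
  (forall p, In p L -> P p) /\ 0 <= lam /\ y <<= lam <.> list_sup X O L.

Lemma generated_cone_sum (x y : X) : generated_cone x -> generated_cone y ->
  exists L lam, (forall p, In p L -> P p) /\ 0 <= lam /\
    x <<= lam <.> list_sup X O L /\ y <<= lam <.> list_sup X O L.
Proof. intros [L1 [l1 [H1 [Hl1 Hx]]]] [L2 [l2 [H2 [Hl2 Hy]]]]. exists (L1 ++ L2), (l1 + l2).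
 split; [intros p Hp; apply in_app_or in Hp; destruct Hp; auto|]. split; [lra|].
 split.
 - eapply bl_le_trans; [exact Hx|].
   eapply bl_le_trans; [apply bl_le_scal; [exact Hl1|apply list_sup_app_l]|].
   apply le_scal_r; [lra|apply list_sup_base].
 - eapply bl_le_trans; [exact Hy|].
   eapply bl_le_trans; [apply bl_le_scal; [exact Hl2|apply list_sup_app_r]|].
   apply le_scal_r; [lra|apply list_sup_base]. Qed.

Lemma generated_cone_avoiding : avoiding_cone P generated_cone.
Proof. constructor.
 - exists nil, 0. repeat split; simpl; try tauto; try lra. rewrite scal0l. apply bl_le_refl.
 - intros x y Hx Hy. destruct (generated_cone_sum x y Hx Hy) as [L [l [HL [Hl [Hx' Hy']]]]].
   exists L, (l + l). repeat split; auto; try lra. rewrite bl_scalDl. apply le_add2; auto.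
 - intros a x Ha [L [l [H1 [Hl Hx]]]]. exists L, (a * l). repeat split; auto.
   apply Rmult_le_pos; auto. rewrite <- bl_scalA. apply bl_le_scal; auto.
 - intros x y Hyx [L [l [H1 [Hl Hx]]]]. exists L, l. repeat split; auto. eapply bl_le_trans; eauto.
 - intros x y Hx Hy. destruct (generated_cone_sum x y Hx Hy) as [L [l [HL [Hl [Hx' Hy']]]]].
   exists L, l. repeat split; auto. apply bl_sup_least; auto.
 - intros q [L [l [H1 [Hl Hq]]]] He. apply (P_avoids L l H1 Hl). eapply bl_le_trans; eauto.
 - intros p Hp. exists (p :: nil), 1. repeat split; try lra. intros q [<-|[]]; auto.
   rewrite bl_scal1. simpl. apply bl_sup_l. Qed.

Lemma chain_union_avoiding (F : (X -> Prop) -> Prop) : (exists A, F A) ->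
  (forall A, F A -> avoiding_cone P A) ->
  (forall A B, F A -> F B -> (forall x, A x -> B x) \/ (forall x, B x -> A x)) ->
  avoiding_cone P (fun x => exists A, F A /\ A x).
Proof. intros [A0 FA0] HF Htot.
 assert (common : forall x y, (exists A, F A /\ A x) -> (exists A, F A /\ A y) ->
    exists A, F A /\ A x /\ A y).
 { intros x y [A [FA Ax]] [B [FB By]]. destruct (Htot A B FA FB) as [H|H].
   exists B; auto. exists A; auto. }
 constructor.
 - exists A0; split; auto. apply (cone_zero _ _ (HF _ FA0)).
 - intros x y Hx Hy. destruct (common _ _ Hx Hy) as [A [FA [Ax Ay]]]. exists A; split; auto.
   apply (cone_add _ _ (HF _ FA)); auto.
 - intros a x Ha [A [FA Ax]]. exists A; split; auto. apply (cone_scal _ _ (HF _ FA)); auto.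
 - intros x y Hyx [A [FA Ax]]. exists A; split; auto. apply (cone_down _ _ (HF _ FA) x); auto.
 - intros x y Hx Hy. destruct (common _ _ Hx Hy) as [A [FA [Ax Ay]]]. exists A; split; auto.
   apply (cone_sup _ _ (HF _ FA)); auto.
 - intros q [A [FA Aq]]. apply (cone_avoids _ _ (HF _ FA)); auto.
 - intros p Hp. exists A0; split; auto. apply (cone_contains _ _ (HF _ FA0)); auto. Qed.

Section Extension.
Variable M : X -> Prop.
Hypothesis HM : avoiding_cone P M.
Variable w : X.
Hypothesis w_ge0 : O <<= w.

Definition extended_cone (y : X) : Prop := exists q lam, M q /\ 0 <= lam /\ y <<= q <+> lam <.> w.

Lemma extended_cone_sub (x : X) : M x -> extended_cone x.
Proof. intro H. exists x, 0. repeat split; auto; try lra. rewrite scal0l, bl_add0. apply bl_le_refl. Qed.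

Lemma extended_cone_w : extended_cone w.
Proof. exists O, 1. repeat split; try lra. apply (cone_zero _ _ HM).
 rewrite add0l, bl_scal1. apply bl_le_refl. Qed.

Lemma extended_cone_avoiding :
  ~ (exists q lam, M q /\ 0 <= lam /\ e <<= q <+> lam <.> w) -> avoiding_cone P extended_cone.
Proof. intro Hn. constructor.
 - apply extended_cone_sub, (cone_zero _ _ HM).
 - intros x y [q1 [l1 [H1 [Hl1 Hx]]]] [q2 [l2 [H2 [Hl2 Hy]]]]. exists (q1 <+> q2), (l1 + l2).
   split. apply (cone_add _ _ HM); auto. split. lra. rewrite bl_scalDl, addACA. apply le_add2; auto.
 - intros a x Ha [q [l [H1 [Hl Hx]]]]. exists (a <.> q), (a * l). split. apply (cone_scal _ _ HM); auto.
   split. apply Rmult_le_pos; auto. rewrite <- bl_scalA, <- bl_scalDr. apply bl_le_scal; auto.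
 - intros x y Hyx [q [l [H1 [Hl Hx]]]]. exists q, l. repeat split; auto. eapply bl_le_trans; eauto.
 - intros x y [q1 [l1 [H1 [Hl1 Hx]]]] [q2 [l2 [H2 [Hl2 Hy]]]]. exists (q1 \v q2), (l1 + l2).
   split. apply (cone_sup _ _ HM); auto. split. lra. apply bl_sup_least.
   + eapply bl_le_trans; [exact Hx|]. apply le_add2. apply bl_sup_l. apply le_scal_r; auto; lra.
   + eapply bl_le_trans; [exact Hy|]. apply le_add2. apply bl_sup_r. apply le_scal_r; auto; lra.
 - intros q [q1 [l [H1 [Hl Hq]]]] He. apply Hn. exists q1, l.
   repeat split; auto. eapply bl_le_trans; eauto.
 - intros p Hp. apply extended_cone_sub, (cone_contains _ _ HM); auto. Qed.
End Extension.

Lemma maximal_cone_dichotomy (M : X -> Prop) : avoiding_cone P M ->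
  (forall B, (forall x, M x -> B x) -> avoiding_cone P B -> forall x, B x -> M x) ->
  forall w, O <<= w -> M w \/ exists q lam, M q /\ 0 <= lam /\ e <<= q <+> lam <.> w.
Proof. intros HM Hmax w Hw.
 destruct (classic (exists q lam, M q /\ 0 <= lam /\ e <<= q <+> lam <.> w)) as [H|H]; auto.
 left. apply (Hmax (extended_cone M w)).
 - apply extended_cone_sub.
 - apply extended_cone_avoiding; auto.
 - apply extended_cone_w; auto. Qed.

(* Hence a maximal avoiding cone is total: otherwise both x^+ and x^- would
   dominate e - q for some q in M, and x^+ \^ x^- = 0 forces e <= q. *)
Lemma maximal_cone_total (M : X -> Prop) : avoiding_cone P M ->
  (forall w, O <<= w -> M w \/ exists q lam, M q /\ 0 <= lam /\ e <<= q <+> lam <.> w) ->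
  forall x, M x \/ M (-- x).
Proof. intros HM Hdich x.
 destruct (Hdich (ppart X x) (ppart_ge0 X x)) as [Hp|[q1 [l1 [Hq1 [Hl1 He1]]]]].
 { left. apply (cone_down _ _ HM (ppart X x)); auto. apply le_ppart. }
 destruct (Hdich (npart X x) (npart_ge0 X x)) as [Hn|[q2 [l2 [Hq2 [Hl2 He2]]]]].
 { right. apply (cone_down _ _ HM (npart X x)); auto. apply le_ppart. }
 exfalso. apply (cone_avoids _ _ HM (q1 \v q2)); [apply (cone_sup _ _ HM); auto|].
 assert (Hle : forall q l u, O <<= u -> e <<= q <+> l <.> u -> q <<= q1 \v q2 -> 0 <= l <= l1 + l2 ->
   e <+> -- (q1 \v q2) <<= (l1 + l2) <.> u).
 { intros q l u Hu He Hq Hl. apply le_move_l'. eapply bl_le_trans; [exact He|].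
   rewrite bl_addC. apply le_add2; auto. apply le_scal_r; auto; lra. }
 rewrite <- (add0l X (q1 \v q2)). apply le_move_r'.
 apply (le_disjoint_le0 X _ (ppart X x) (npart X x) (l1 + l2)); [lra|apply ppart_inf_npart|..].
 - apply (Hle q1 l1); auto using ppart_ge0, bl_sup_l; lra.
 - apply (Hle q2 l2); auto using npart_ge0, bl_sup_r; lra. Qed.

Theorem separation : exists f, is_character f /\ forall p, P p -> f p <= 0.
Proof.
 destruct (zorn_nonempty_chains X (avoiding_cone P) generated_cone O
   generated_cone_avoiding (cone_zero _ _ generated_cone_avoiding) chain_union_avoiding)
   as [M [HM Hmax]].
 pose proof (maximal_cone_total M HM (maximal_cone_dichotomy M HM Hmax)) as Mtot.
 exists (cone_char P M HM). split; [apply (cone_char_is_character P M HM Mtot)|].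
 intros p Hp. apply (cone_char_nonpos P M HM), (cone_contains _ _ HM), Hp. Qed.
End Separation.
End Characters.

Section Spectrum.
Variable X : BanachLattice.
Local Notation O := (@bl_zero X).
Variable e : X.
Hypothesis e_ge0 : O <<= e.
Hypothesis abs_le_norm_e : forall x : X, bl_abs x <<= bl_norm x <.> e.
Hypothesis norm_le_e : forall (x : X) r, 0 <= r -> bl_abs x <<= r <.> e -> bl_norm x <= r.
Local Notation character := (is_character X e).

Definition spectrum : Type := {f : X -> R | character f}.
Definition ev (k : spectrum) (x : X) : R := proj1_sig k x.
Lemma ev_character (k : spectrum) : character (ev k).
Proof. exact (proj2_sig k). Qed.

Lemma spectrum_ext (k1 k2 : spectrum) : (forall x, ev k1 x = ev k2 x) -> k1 = k2.
Proof. intro H. destruct k1 as [f1 H1], k2 as [f2 H2]. unfold ev in H; simpl in H.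
 assert (f1 = f2) by (apply functional_extensionality; exact H). subst f2.
 f_equal. apply proof_irrelevance. Qed.

Lemma spectrum_separates (k1 k2 : spectrum) : k1 <> k2 -> exists x, ev k1 x <> ev k2 x.
Proof. intro Hne. apply NNPP; intro Hn. apply Hne, spectrum_ext.
 intro x. apply NNPP; intro h. apply Hn. exists x; exact h. Qed.

(* The weak topology. Thanks to the lattice operations a single element
   suffices for a basic neighbourhood {k' : |k' x - k x| < eps}. *)
Definition weak_open (U : spectrum -> Prop) : Prop :=
  forall k, U k -> exists x eps, eps > 0 /\ forall k', Rabs (ev k' x - ev k x) < eps -> U k'.

Lemma basic_nbhd_inter (k : spectrum) (x1 x2 : X) (e1 e2 : R) : e1 > 0 -> e2 > 0 ->
  exists x eps, eps > 0 /\ forall k', Rabs (ev k' x - ev k x) < eps ->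
     Rabs (ev k' x1 - ev k x1) < e1 /\ Rabs (ev k' x2 - ev k x2) < e2.
Proof. intros H1 H2.
 exists ((/e1) <.> bl_abs (x1 <+> -- (ev k x1 <.> e)) \v
         (/e2) <.> bl_abs (x2 <+> -- (ev k x2 <.> e))), 1.
 split; [lra|]. intros k' H.
 assert (Hk := ev_character k). assert (Hk' := ev_character k').
 rewrite !(ch_sup _ _ _ Hk), !(ch_scal _ _ _ Hk), !(ch_sup _ _ _ Hk'), !(ch_scal _ _ _ Hk') in H.
 rewrite !(ch_abs _ _ _ Hk), !(ch_abs _ _ _ Hk'), !(ch_sub_unit _ _ _ Hk), !(ch_sub_unit _ _ _ Hk') in H.
 rewrite !Rminus_diag, Rabs_R0, !Rmult_0_r, (Rmax_left 0 0), Rminus_0_r in H by lra.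
 assert (Hmax : forall a b, Rabs (Rmax a b) < 1 -> a < 1 /\ b < 1)
   by (intros a b Hab; destruct (Rabs_def2 _ _ Hab);
       pose proof (Rmax_l a b); pose proof (Rmax_r a b); lra).
 destruct (Hmax _ _ H) as [Ha Hb]. split.
 - apply (Rmult_lt_compat_l e1) in Ha; auto.
   rewrite <- Rmult_assoc, Rinv_r, Rmult_1_l, Rmult_1_r in Ha; lra.
 - apply (Rmult_lt_compat_l e2) in Hb; auto.
   rewrite <- Rmult_assoc, Rinv_r, Rmult_1_l, Rmult_1_r in Hb; lra. Qed.

Lemma weak_open_full : weak_open (fun _ => True).
Proof. intros k _. exists O, 1. split; [lra|auto]. Qed.
Lemma weak_open_inter (U V : spectrum -> Prop) :
  weak_open U -> weak_open V -> weak_open (fun x => U x /\ V x).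
Proof. intros HU HV k [Uk Vk]. destruct (HU k Uk) as [x1 [e1 [He1 H1]]].
 destruct (HV k Vk) as [x2 [e2 [He2 H2]]].
 destruct (basic_nbhd_inter k x1 x2 e1 e2 He1 He2) as [x [eps [Heps H]]].
 exists x, eps. split; auto. intros k' Hk'. destruct (H k' Hk'). split; auto. Qed.
Lemma weak_open_union (I : Type) (U : I -> spectrum -> Prop) :
  (forall i, weak_open (U i)) -> weak_open (fun x => exists i, U i x).
Proof. intros HU k [i Hi]. destruct (HU i k Hi) as [x [eps [He H]]]. exists x, eps. split; auto.
 intros k' Hk'. exists i; auto. Qed.
Lemma weak_open_ball (k : spectrum) (x : X) (eps : R) :
  weak_open (fun k' => Rabs (ev k' x - ev k x) < eps).
Proof. intros k0 H0. exists x, (eps - Rabs (ev k0 x - ev k x)). split; [lra|].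
 intros k' H'. pose proof (Rabs_triang (ev k' x - ev k0 x) (ev k0 x - ev k x)).
 replace (ev k' x - ev k0 x + (ev k0 x - ev k x)) with (ev k' x - ev k x) in H by ring. lra. Qed.

Definition Spectrum : TopSpace := {| ts_car := spectrum; ts_open := weak_open;
  ts_open_full := weak_open_full; ts_open_inter := weak_open_inter;
  ts_open_union := weak_open_union |}.

Lemma ev_continuous (x : X) : continuous_fun (K := Spectrum) (fun k => ev k x).
Proof. intros k eps Heps. exists (fun k' => Rabs (ev k' x - ev k x) < eps). split.
 apply weak_open_ball. split; auto. rewrite Rminus_diag, Rabs_R0; lra. Qed.

Lemma spectrum_hausdorff : hausdorff_space Spectrum.
Proof. intros k1 k2 Hne. simpl in *.
 destruct (spectrum_separates k1 k2 Hne) as [x Hx].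
 set (d := Rabs (ev k1 x - ev k2 x) / 2).
 assert (Hd : 0 < d) by (unfold d; assert (ev k1 x - ev k2 x <> 0) by lra;
                         pose proof (Rabs_pos_lt _ H); lra).
 exists (fun k => Rabs (ev k x - ev k1 x) < d), (fun k => Rabs (ev k x - ev k2 x) < d).
 split; [apply weak_open_ball|]. split; [apply weak_open_ball|].
 split; [rewrite Rminus_diag, Rabs_R0; lra|]. split; [rewrite Rminus_diag, Rabs_R0; lra|].
 intros z [H1 H2]. pose proof (Rabs_triang (ev k1 x - ev z x) (ev z x - ev k2 x)).
 replace (ev k1 x - ev z x + (ev z x - ev k2 x)) with (ev k1 x - ev k2 x) in H by ring.
 rewrite Rabs_minus_sym in H1. unfold d in *. lra. Qed.

Definition bump (k : spectrum) (x : X) (eps : R) : X :=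
  e <+> -- ((/eps) <.> bl_abs (x <+> -- (ev k x <.> e))).

Lemma ev_bump (k k' : spectrum) (x : X) (eps : R) :
  ev k' (bump k x eps) = 1 - / eps * Rabs (ev k' x - ev k x).
Proof. assert (Hk' := ev_character k'). unfold bump.
 rewrite (ch_sub _ _ _ Hk'), (ch_unit _ _ _ Hk'), (ch_scal _ _ _ Hk'),
   (ch_abs _ _ _ Hk'), (ch_sub_unit _ _ _ Hk'). reflexivity. Qed.

Lemma ev_bump_center (k : spectrum) (x : X) (eps : R) : ev k (bump k x eps) = 1.
Proof. rewrite ev_bump, Rminus_diag, Rabs_R0. ring. Qed.

Lemma ev_bump_outside (k k' : spectrum) (x : X) (eps : R) : eps > 0 ->
  ~ Rabs (ev k' x - ev k x) < eps -> ev k' (bump k x eps) <= 0.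
Proof. intros Heps Hout. rewrite ev_bump.
 assert (Hle : eps <= Rabs (ev k' x - ev k x)) by lra.
 apply (Rmult_le_compat_l (/eps)) in Hle; [|apply Rlt_le, Rinv_0_lt_compat; lra].
 rewrite Rinv_l in Hle; lra. Qed.

Section Compactness.
Variable I : Type.
Variable U : I -> spectrum -> Prop.

Definition cover_bumps (p : X) : Prop := exists k i x eps, U i k /\ eps > 0 /\
  (forall k', Rabs (ev k' x - ev k x) < eps -> U i k') /\ p = bump k x eps.

Lemma cover_bumps_finite (L : list X) : (forall p, In p L -> cover_bumps p) ->
  exists l : list I, forall k', (forall i, In i l -> ~ U i k') -> forall p, In p L -> ev k' p <= 0.
Proof. induction L as [|p L IH]; intro HL.
 - exists nil. intros k' _ p [].
 - destruct IH as [l Hl]; [intros; apply HL; simpl; auto|].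
   destruct (HL p (or_introl eq_refl)) as [k [i [x [eps [HUi [Heps [Hnb ->]]]]]]].
   exists (i :: l). intros k' Hk' q [<-|Hq].
   + apply ev_bump_outside; auto. intro h. apply (Hk' i); simpl; auto.
   + apply (Hl k'); auto. intros i' Hi'. apply Hk'; simpl; auto. Qed.

(* If no finite subfamily covers, the cover bumps satisfy the hypothesis of
   the separation theorem; the resulting character lies in some U i, where
   its own bump takes the value 1 > 0: contradiction. *)
Lemma spectrum_finite_subcover : (forall i, weak_open (U i)) -> (forall k, exists i, U i k) ->
  exists l : list I, forall k, exists i, In i l /\ U i k.
Proof. intros HU Hcov. apply NNPP; intro Hn.
 assert (Hout : forall l, exists k, forall i, In i l -> ~ U i k).
 { intro l. apply NNPP; intro h. apply Hn. exists l. intro k. apply NNPP; intro h2. apply h.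
   exists k. intros i Hi HUi. apply h2. exists i; auto. }
 destruct (separation X e e_ge0 abs_le_norm_e cover_bumps) as [f [Hf Hfp]].
 { intros L lam HL Hlam Hle. destruct (cover_bumps_finite L HL) as [l Hl].
   destruct (Hout l) as [k Hk]. assert (Hk0 := ev_character k).
   apply (ch_mono _ _ _ Hk0) in Hle. rewrite (ch_unit _ _ _ Hk0), (ch_scal _ _ _ Hk0) in Hle.
   pose proof (ch_list_sup_nonpos _ _ _ Hk0 L (Hl k Hk)).
   assert (lam * ev k (list_sup X O L) <= 0) by nra. lra. }
 set (k0 := exist _ f Hf : spectrum).
 destruct (Hcov k0) as [i Hi]. destruct (HU i k0 Hi) as [x [eps [Heps Hnb]]].
 assert (Hbump : ev k0 (bump k0 x eps) <= 0) by (apply Hfp; exists k0, i, x, eps; auto).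
 rewrite ev_bump_center in Hbump. lra. Qed.
End Compactness.

Lemma spectrum_compact : compact_space Spectrum.
Proof. intros I U. apply spectrum_finite_subcover. Qed.

(* A positive multiple c e below u^+ is already below u: the negative part
   u^- is disjoint from c e and dominated by a multiple of e, so it is 0. *)
Lemma unit_below_ppart (c : R) (u : X) : 0 < c -> c <.> e <<= ppart X u -> c <.> e <<= u.
Proof. intros Hc H. set (n := npart X u).
 assert (Hn0 : O <<= n) by apply npart_ge0.
 assert (Hce : O <<= c <.> e) by (apply scal_pos; auto; lra).
 assert (Hdisj : n \^ (c <.> e) = O).
 { apply bl_le_antisym; [|apply bl_inf_greatest; auto].
   rewrite <- (ppart_inf_npart X u), (inf_comm X (ppart X u)).
   apply inf_mono; [apply bl_le_refl|exact H]. }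
 set (t := Rmax 1 (bl_norm n / c)).
 assert (Hn : n = O).
 { apply bl_le_antisym; auto. apply (le_disjoint_le0 X n n (c <.> e) t); auto.
   - unfold t. pose proof (Rmax_l 1 (bl_norm n / c)). lra.
   - rewrite <- (bl_scal1 X n) at 1. apply le_scal_r; auto. apply Rmax_l.
   - eapply bl_le_trans; [apply le_abs|]. eapply bl_le_trans; [apply abs_le_norm_e|].
     rewrite bl_scalA. apply le_scal_r; auto.
     apply (Rle_trans _ (bl_norm n / c * c)); [right; field; lra|].
     apply Rmult_le_compat_r; [lra|apply Rmax_r]. }
 rewrite ppart_eq in H. fold n in H. rewrite Hn, bl_add0 in H. exact H. Qed.

Lemma list_sup_single (y : X) (L : list X) :
  (forall p, In p L -> p = y) -> list_sup X O L <<= ppart X y.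
Proof. induction L as [|a L IH]; simpl; intro H. apply ppart_ge0.
 rewrite (H a) by auto. apply bl_sup_least; [apply le_ppart|]. apply IH. intros; apply H; auto. Qed.

(* For 0 <= r < ||x||, the singleton {r e - |x|} satisfies the hypothesis of
   the separation theorem: e <= lam (r e - |x|)^+ would force
   |x| <= (r - 1/lam) e, hence ||x|| <= r. *)
Lemma level_element_avoids (x : X) (r : R) : 0 <= r < bl_norm x ->
  forall L lam, (forall p, In p L -> p = r <.> e <+> -- bl_abs x) -> 0 <= lam ->
  ~ e <<= lam <.> list_sup X O L.
Proof. intros Hr L lam HL Hlam Hle. set (y := r <.> e <+> -- bl_abs x) in *.
 assert (H1 : e <<= lam <.> ppart X y).
 { eapply bl_le_trans; [exact Hle|]. apply bl_le_scal; auto. apply list_sup_single; auto. }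
 destruct (Req_dec lam 0) as [Hl|Hl].
 - rewrite Hl, scal0l in H1. assert (He : e = O) by (apply bl_le_antisym; auto).
   assert (Hx : x = O).
   { apply abs_le0. eapply bl_le_trans; [apply abs_le_norm_e|].
     rewrite He, scal0r. apply bl_le_refl. }
   rewrite Hx, norm0 in Hr. lra.
 - assert (Hi : 0 < / lam) by (apply Rinv_0_lt_compat; lra).
   assert (H2 : (/lam) <.> e <<= y).
   { apply unit_below_ppart; auto.
     eapply bl_le_trans; [apply bl_le_scal; [lra|exact H1]|].
     rewrite bl_scalA, Rinv_l, bl_scal1 by lra. apply bl_le_refl. }
   unfold y in H2. apply le_move_l in H2. rewrite bl_addC in H2. apply le_move_r in H2.
   rewrite <- scal_sub in H2.
   assert (H3 : bl_abs x <<= Rmax (r - / lam) 0 <.> e)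
     by (eapply bl_le_trans; [exact H2|]; apply le_scal_r; auto; apply Rmax_l).
   apply norm_le_e in H3; [|apply Rmax_r].
   assert (Rmax (r - / lam) 0 <= r) by (apply Rmax_lub; lra). lra. Qed.

Lemma norm_attained (x : X) (r : R) : 0 <= r < bl_norm x ->
  exists k : spectrum, r <= Rabs (ev k x).
Proof. intro Hr. set (y := r <.> e <+> -- bl_abs x).
 destruct (separation X e e_ge0 abs_le_norm_e (fun p => p = y)) as [f [Hf Hfy]].
 { apply level_element_avoids; auto. }
 specialize (Hfy y eq_refl). unfold y in Hfy.
 rewrite (ch_sub _ _ _ Hf), (ch_scal _ _ _ Hf), (ch_unit _ _ _ Hf), (ch_abs _ _ _ Hf) in Hfy.
 exists (exist _ f Hf). unfold ev; simpl. lra. Qed.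

Lemma ev_bound (k : spectrum) (x : X) : Rabs (ev k x) <= bl_norm x.
Proof. apply (ch_bound _ _ abs_le_norm_e _ (ev_character k)). Qed.

Lemma norm_le_sup (v : X) (r : R) : 0 <= r ->
  (forall k : spectrum, Rabs (ev k v) <= r) -> bl_norm v <= r.
Proof. intros Hr H. destruct (Rle_dec (bl_norm v) r) as [h|h]; auto. exfalso.
 destruct (norm_attained v ((bl_norm v + r) / 2)) as [k Hk]; [lra|].
 specialize (H k). lra. Qed.

Lemma norm_is_sup (x : X) : sup_norm_is (fun k : Spectrum => ev k x) (bl_norm x).
Proof. split.
 - intros z [->|[k ->]]; [apply norm_ge0|apply ev_bound].
 - intros b Hb. apply norm_le_sup; [apply Hb; left; reflexivity|].
   intro k. apply Hb. right. exists k. reflexivity. Qed.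

Lemma ev_injective (x y : X) : (forall k : spectrum, ev k x = ev k y) -> x = y.
Proof. intro H. apply sub_eq0, bl_norm_eq0, Rle_antisym; [|apply norm_ge0].
 apply norm_le_sup; [lra|]. intro k.
 rewrite (ch_sub _ _ _ (ev_character k)), H, Rminus_diag, Rabs_R0. lra. Qed.

Lemma continuous_sub (h1 h2 : spectrum -> R) :
  continuous_fun (K := Spectrum) h1 -> continuous_fun (K := Spectrum) h2 ->
  continuous_fun (K := Spectrum) (fun k => h1 k - h2 k).
Proof. intros H1 H2 k eps Heps. destruct (H1 k (eps/2)) as [U1 [O1 [U1k HU1]]]; [lra|].
 destruct (H2 k (eps/2)) as [U2 [O2 [U2k HU2]]]; [lra|].
 exists (fun x => U1 x /\ U2 x). split; [apply (weak_open_inter U1 U2 O1 O2)|]. split; auto.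
 intros y [Hy1 Hy2]. specialize (HU1 y Hy1). specialize (HU2 y Hy2).
 pose proof (Rabs_triang (h1 y - h1 k) (-(h2 y - h2 k))) as H. rewrite Rabs_Ropp in H.
 replace (h1 y - h1 k + - (h2 y - h2 k)) with (h1 y - h2 y - (h1 k - h2 k)) in H by ring. lra. Qed.

Lemma continuous_open_gt (h : spectrum -> R) (c : R) :
  continuous_fun (K := Spectrum) h -> weak_open (fun k => c < h k).
Proof. intros Hh k Hk. destruct (Hh k (h k - c)) as [U [OU [Uk HU]]]; [lra|].
 destruct (OU k Uk) as [x [eps [Heps Hn]]]. exists x, eps. split; auto.
 intros k' Hk'. specialize (HU k' (Hn k' Hk')). apply Rabs_def2 in HU. lra. Qed.

(* Surjectivity onto C(K): a lattice form of the Stone-Weierstrass theorem. *)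
Section Surjectivity.
Variable f : spectrum -> R.
Hypothesis f_continuous : continuous_fun (K := Spectrum) f.

Lemma two_point_interpolation (k1 k2 : spectrum) : exists y, ev k1 y = f k1 /\ ev k2 y = f k2.
Proof. assert (H1 := ev_character k1). assert (H2 := ev_character k2).
 destruct (classic (k1 = k2)) as [<-|Hne].
 - exists (f k1 <.> e). rewrite (ch_scal _ _ _ H1), (ch_unit _ _ _ H1). split; ring.
 - destruct (spectrum_separates k1 k2 Hne) as [x Hx].
   set (a := (f k1 - f k2) / (ev k1 x - ev k2 x)). set (b := f k1 - a * ev k1 x).
   exists (a <.> x <+> b <.> e).
   rewrite (ch_add _ _ _ H1), (ch_add _ _ _ H2), !(ch_scal _ _ _ H1), !(ch_scal _ _ _ H2),
     (ch_unit _ _ _ H1), (ch_unit _ _ _ H2).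
   unfold b, a. split; field; lra. Qed.

(* Sup over a finite subcover: an element exact at phi and above f - eps. *)
Lemma lower_approx_at (phi : spectrum) (eps : R) : eps > 0 ->
  exists g, ev phi g = f phi /\ forall chi, f chi - eps < ev chi g.
Proof. intro He.
 destruct (spectrum_compact {y : X | ev phi y = f phi}
   (fun y chi => f chi - eps < ev chi (proj1_sig y))) as [l Hl].
 - intro y. simpl. pose proof (continuous_open_gt _ (- eps)
     (continuous_sub _ _ (ev_continuous (proj1_sig y)) f_continuous)) as H.
   intros k Hk. destruct (H k) as [x [d [Hd Hx]]]; [simpl; lra|].
   exists x, d. split; auto. intros k' Hk'. specialize (Hx k' Hk'). simpl in Hx. lra.
 - intro chi. destruct (two_point_interpolation phi chi) as [y [Hy1 Hy2]].
   exists (exist _ y Hy1). simpl. lra.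
 - exists (list_sup X (f phi <.> e) (map (@proj1_sig _ _) l)). split.
   + assert (Hp := ev_character phi). clear Hl. induction l as [|[y Hy] l IH]; simpl.
     * rewrite (ch_scal _ _ _ Hp), (ch_unit _ _ _ Hp). ring.
     * rewrite (ch_sup _ _ _ Hp), IH, Hy. apply Rmax_left. lra.
   + intro chi. destruct (Hl chi) as [[y Hy] [Hin Hc]]. simpl in Hc.
     eapply Rlt_le_trans; [exact Hc|]. apply (ch_mono _ _ _ (ev_character chi)).
     apply list_sup_ge. apply (in_map (@proj1_sig _ _)) in Hin. exact Hin. Qed.

(* Inf over a finite subcover of the lower approximations. *)
Lemma uniform_approx (eps : R) : eps > 0 -> exists x, forall chi, Rabs (ev chi x - f chi) < eps.
Proof. intro He.
 destruct (spectrum_compact {g : X | forall chi, f chi - eps < ev chi g}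
   (fun g chi => ev chi (proj1_sig g) < f chi + eps)) as [l Hl].
 - intro g. simpl. pose proof (continuous_open_gt _ (- eps)
     (continuous_sub _ _ f_continuous (ev_continuous (proj1_sig g)))) as H.
   intros k Hk. destruct (H k) as [x [d [Hd Hx]]]; [simpl; lra|].
   exists x, d. split; auto. intros k' Hk'. specialize (Hx k' Hk'). simpl in Hx. lra.
 - intro chi. destruct (lower_approx_at chi eps He) as [g [Hg1 Hg2]].
   exists (exist _ g Hg2). simpl. lra.
 - destruct l as [|[g0 Hg0] l]; [exists O; intro chi; destruct (Hl chi) as [i [[] _]]|].
   exists (list_inf X g0 (map (@proj1_sig _ _) l)). intro chi.
   assert (Hlow : f chi - eps < ev chi (list_inf X g0 (map (@proj1_sig _ _) l))).
   { assert (Hc := ev_character chi). clear Hl. induction l as [|[y Hy] l IH]; simpl; auto.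
     rewrite (ch_inf _ _ _ Hc). specialize (Hy chi). apply Rmin_glb_lt; auto. }
   destruct (Hl chi) as [[y Hy] [Hin Hc]]. simpl in Hc.
   assert (Hup : ev chi (list_inf X g0 (map (@proj1_sig _ _) l)) <= ev chi y).
   { apply (ch_mono _ _ _ (ev_character chi)). destruct Hin as [Heq|Hin].
     - injection Heq as <-. apply list_inf_base.
     - apply list_inf_le. apply (in_map (@proj1_sig _ _)) in Hin. exact Hin. }
   apply Rabs_def1; lra. Qed.

Lemma inv_succ_pos (n : nat) : 0 < / (INR n + 1).
Proof. apply Rinv_0_lt_compat. pose proof (pos_INR n); lra. Qed.

Lemma inv_succ_small (eps : R) : eps > 0 ->
  exists N : nat, forall n, (n >= N)%nat -> / (INR n + 1) < eps.
Proof. intro He. destruct (archimed (/ eps)) as [H1 _].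
 assert (Hp : 0 < / eps) by (apply Rinv_0_lt_compat; lra).
 exists (Z.to_nat (up (/ eps))). intros n Hn.
 assert (Hz : (0 <= up (/eps))%Z) by (apply le_IZR; lra).
 apply le_INR in Hn. rewrite INR_IZR_INZ, Z2Nat.id in Hn by exact Hz.
 rewrite <- (Rinv_inv eps). apply Rinv_lt_contravar; [apply Rmult_lt_0_compat|]; lra. Qed.

(* Uniform approximations within 1/(n+1) form a Cauchy sequence, since the
   norm is the sup norm; its limit evaluates exactly to f. *)
Lemma ev_surjective : exists x, forall k, ev k x = f k.
Proof.
 assert (Hs : forall n : nat, {x : X | forall chi, Rabs (ev chi x - f chi) < / (INR n + 1)})
   by (intro n; apply constructive_indefinite_description, uniform_approx, inv_succ_pos).
 set (xs := fun n => proj1_sig (Hs n)).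
 assert (Hxs : forall n chi, Rabs (ev chi (xs n) - f chi) < / (INR n + 1))
   by (intros n chi; unfold xs; destruct (Hs n); simpl; auto).
 assert (Hdist : forall n m, bl_norm (xs n <+> -- xs m) <= / (INR n + 1) + / (INR m + 1)).
 { intros n m. apply norm_le_sup; [pose proof (inv_succ_pos n); pose proof (inv_succ_pos m); lra|].
   intro k. rewrite (ch_sub _ _ _ (ev_character k)).
   pose proof (Hxs n k) as Hn. pose proof (Hxs m k) as Hm.
   pose proof (Rabs_triang (ev k (xs n) - f k) (-(ev k (xs m) - f k))) as Htri.
   rewrite Rabs_Ropp in Htri.
   replace (ev k (xs n) - f k + - (ev k (xs m) - f k)) with (ev k (xs n) - ev k (xs m)) in Htri by ring.
   lra. }
 destruct (bl_complete X xs) as [l Hl].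
 { intros eps Heps. destruct (inv_succ_small (eps / 2)) as [N HN]; [lra|]. exists N. intros n m Hn Hm.
   specialize (Hdist n m). specialize (HN n Hn) as H1. specialize (HN m Hm). lra. }
 exists l. intro k.
 assert (Hsmall : forall d, d > 0 -> Rabs (ev k l - f k) <= d).
 { intros d Hd. destruct (Hl (d / 2)) as [N1 HN1]; [lra|].
   destruct (inv_succ_small (d / 2)) as [N2 HN2]; [lra|].
   set (n := max N1 N2). specialize (HN1 n (Nat.le_max_l _ _)). specialize (HN2 n (Nat.le_max_r _ _)).
   pose proof (Hxs n k) as H3. pose proof (ev_bound k (xs n <+> -- l)) as H4.
   rewrite (ch_sub _ _ _ (ev_character k)), Rabs_minus_sym in H4.
   pose proof (Rabs_triang (ev k l - ev k (xs n)) (ev k (xs n) - f k)) as H5.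
   replace (ev k l - ev k (xs n) + (ev k (xs n) - f k)) with (ev k l - f k) in H5 by ring. lra. }
 destruct (Req_dec (ev k l - f k) 0) as [Heq|Hne]; [lra|].
 exfalso. pose proof (Rabs_pos_lt _ Hne). specialize (Hsmall (Rabs (ev k l - f k) / 2)). lra. Qed.
End Surjectivity.

Theorem order_unit_representation : exists (K : TopSpace) (T : X -> K -> R),
  compact_space K /\ hausdorff_space K /\ lattice_isometry_onto_CK X K T.
Proof. exists Spectrum, (fun x k => ev k x).
 split; [apply spectrum_compact|]. split; [apply spectrum_hausdorff|].
 refine (conj _ (conj _ (conj _ (conj _ (conj _ (conj _ (conj _ _))))))).
 - intro x. apply ev_continuous.
 - intros x y k. apply (ch_add _ _ _ (ev_character k)).
 - intros a x k. apply (ch_scal _ _ _ (ev_character k)).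
 - intros x y H. apply ev_injective. exact H.
 - intros g Hg. apply (ev_surjective g Hg).
 - intros x y k. apply (ch_sup _ _ _ (ev_character k)).
 - intros x y k. apply (ch_inf _ _ _ (ev_character k)).
 - apply norm_is_sup. Qed.
End Spectrum.

Theorem mainTheorem14 (X : BanachLattice) (HAM : AM_space X)
  (Hball : exists s : list X,
      (forall x, In x s -> unit_ball X x) /\
      (forall x, unit_ball X x <-> norm_closure (solid_convex_hull (fun y => In y s)) x)) :
  exists (K : TopSpace) (T : X -> K -> R),
    compact_space K /\ hausdorff_space K /\ lattice_isometry_onto_CK X K T.
Proof.
  destruct Hball as [s [Hs_ball Hs_hull]].
  pose proof (unit_ball_order_interval X HAM s Hs_ball Hs_hull) as ball_e.
  apply (order_unit_representation X (sup_abs_list X s)).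
  - apply (order_unit_ge0 X _ ball_e).
  - apply (abs_le_norm_unit X _ ball_e).
  - apply (norm_le_of_abs_le X _ ball_e).
Qed.
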